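(* Let $f:\{-1,1\}^n\to\mathbb{R}$, $f=\sum_{S\subseteq[n]}c_S\chi_S$, be approximately $(s,\nu)$-sparse with respect to $\mathcal{I}\subseteq2^{[n]}$, $|\mathcal{I}|=s$, and let $f_{\mathcal{I}}=\sum_{S\in\mathcal{I}}c_S\chi_S$. Suppose samples $\mathbf{x}_i\in\{-1,1\}^n$ are observed as $y_i=f(\mathbf{x}_i)+\varepsilon_i$ with $|\varepsilon_i|\le\epsilon$, and suppose any two distinct values of $f_{\mathcal{I}}$ differ by at least $4(\epsilon+\nu)$. Let $\eta=\max_i y_i$ over the drawn samples, and let $\mathbf{X}_{\max}$ consist of all drawn $\mathbf{x}_i$ with $|y_i-\eta|\le 2(\epsilon+\nu)$ (Algorithm MaxCluster). Then $\mathbf{X}_{\max}$ contains exactly those drawn inputs $\mathbf{x}_i$ at which $f_{\mathcal{I}}$ attains its maximum value among the drawn samples.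
   Context: $\chi_S(\mathbf{x})=\prod_{j\in S}x_j$. $f$ is approximately $(s,\nu)$-sparse with respect to $\mathcal{I}$ if $\sum_{S\notin\mathcal{I}}|c_S|<\nu$. *)

From mathcomp Require Import all_boot all_order all_algebra.
Set Implicit Arguments. Unset Strict Implicit. Unset Printing Implicit Defensive.
Import Order.TTheory GRing.Theory Num.Theory.
Local Open Scope ring_scope.

Section Defs.
Variables (R : realFieldType) (n : nat).

Definition in_cube (x : 'I_n -> R) : Prop := forall j, x j = 1 \/ x j = -1.

Definition chi (S : {set 'I_n}) (x : 'I_n -> R) : R := \prod_(j in S) x j.

Definition fourier (c : {set 'I_n} -> R) (x : 'I_n -> R) : R :=
  \sum_(S : {set 'I_n}) c S * chi S x.

Definition fourier_on (I : {set {set 'I_n}}) (c : {set 'I_n} -> R)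
  (x : 'I_n -> R) : R := \sum_(S in I) c S * chi S x.

Definition approx_sparse (s : nat) (nu : R) (I : {set {set 'I_n}})
  (c : {set 'I_n} -> R) : Prop :=
  #|I| = s /\ \sum_(S | S \notin I) `|c S| < nu.
End Defs.

Definition fmax (R : realFieldType) (m : nat) (hm : (0 < m)%N) (v : 'I_m -> R) : R :=
  \big[Num.max/v (Ordinal hm)]_(i < m) v i.

Definition max_cluster (R : realFieldType) (m : nat) (hm : (0 < m)%N)
  (y : 'I_m -> R) (eps nu : R) : {set 'I_m} :=
  [set i | `|y i - fmax hm y| <= 2 * (eps + nu)].

From mathcomp Require Import all_boot all_order all_algebra.
From mathcomp Require Import lra.
Import Order.TTheory GRing.Theory Num.Theory.
Local Open Scope ring_scope.

(* Off the index set I, the Fourier tail has weight < nu and every character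
   has modulus 1 on the cube, so each observation y_i is within eps + nu of
   f_I(x_i); hence the observed maximum eta is within eps + nu of max f_I.
   Points where f_I is maximal then lie within 2(eps + nu) of eta, while every
   other point lies 4(eps + nu) below the maximum of f_I, hence more than
   2(eps + nu) below eta. *)

Section FamilyMax.
Context {R : realFieldType} {m : nat} {hm : (0 < m)%N}.

Lemma le_fmax (v : 'I_m -> R) i : v i <= fmax hm v.
Proof.
rewrite /fmax (bigD1 i) //= /Order.max.
by case: ifP => [/ltW|_] //; rewrite lexx.
Qed.

Lemma fmax_attained (v : 'I_m -> R) : exists i, fmax hm v = v i.
Proof.
rewrite /fmax; apply: (big_ind (fun x => exists i, x = v i)).
- by exists (Ordinal hm).
- move=> a b [i ->] [j ->]; rewrite /Order.max.
  by case: ifP => _; [exists j | exists i].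
- by move=> i _; exists i.
Qed.

Lemma dist_fmax_lt {v w : 'I_m -> R} {d : R} :
  (forall i, `|v i - w i| < d) -> `|fmax hm v - fmax hm w| < d.
Proof.
move=> hvw; have [i hi] := fmax_attained v; have [j hj] := fmax_attained w.
have := hvw i; have := hvw j; have := le_fmax v j; have := le_fmax w i.
rewrite hi hj !ltr_norml => ? ? /andP[? ?] /andP[? ?].
by apply/andP; split; lra.
Qed.

Lemma cluster_near_fmax (v w : 'I_m -> R) (d : R) :
  (forall i, `|v i - w i| < d) ->
  (forall i j, w i != w j -> 4 * d <= `|w i - w j|) ->
  [set i | `|v i - fmax hm v| <= 2 * d] = [set i | w i == fmax hm w].
Proof.
move=> hvw hsep; have [i0 hi0] := fmax_attained w.
have := dist_fmax_lt hvw; rewrite ltr_norml => /andP[etaL etaU].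
apply/setP => i; rewrite !inE.
have := hvw i; rewrite ltr_norml => /andP[vL vU].
rewrite ler0_norm ?subr_le0 ?le_fmax // opprB.
have wle := le_fmax w i.
case: eqVneq => [hwi|hwi]; first by apply: ltW; lra.
have := hsep i0 i; rewrite -hi0 eq_sym => /(_ hwi).
rewrite ger0_norm ?subr_ge0 // => gap.
by apply/negbTE; rewrite -ltNge; lra.
Qed.

End FamilyMax.

Section SparseApproximation.
Context {R : realFieldType} {n : nat}.

Lemma norm_chi_cube (S : {set 'I_n}) (x : 'I_n -> R) :
  in_cube x -> `|chi S x| = 1.
Proof.
move=> hx; rewrite /chi normr_prod; apply: big1 => j _.
by case: (hx j) => ->; rewrite ?normrN normr1.
Qed.

Lemma dist_fourier_on_le (c : {set 'I_n} -> R) I (x : 'I_n -> R) :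
  in_cube x ->
  `|fourier c x - fourier_on I c x| <= \sum_(S | S \notin I) `|c S|.
Proof.
move=> hx; rewrite /fourier /fourier_on (bigID (fun S => S \in I)) /=.
rewrite addrC addrK; apply: le_trans (ler_norm_sum _ _ _) _.
by apply: ler_sum => S _; rewrite normrM norm_chi_cube // mulr1.
Qed.

End SparseApproximation.

Theorem lemma3 (R : realFieldType) (n s m : nat) (hm : (0 < m)%N)
  (c : {set 'I_n} -> R) (I : {set {set 'I_n}}) (nu eps : R)
  (xs : 'I_m -> 'I_n -> R) (e y : 'I_m -> R) :
  approx_sparse s nu I c ->
  (forall i, in_cube (xs i)) ->
  (forall i, `|e i| <= eps) ->
  (forall i, y i = fourier c (xs i) + e i) ->
  (forall x x' : 'I_n -> R, in_cube x -> in_cube x' ->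
     fourier_on I c x != fourier_on I c x' ->
     4 * (eps + nu) <= `|fourier_on I c x - fourier_on I c x'|) ->
  max_cluster hm y eps nu =
  [set i | fourier_on I c (xs i) == fmax hm (fun k => fourier_on I c (xs k))].
Proof.
move=> [_ hnu] hcube he hy hsep.
have noise i : `|y i - fourier_on I c (xs i)| < eps + nu.
  rewrite hy addrAC; apply: le_lt_trans (ler_normD _ _) _.
  rewrite [eps + nu]addrC; apply: ltr_leD _ (he i).
  exact: le_lt_trans (dist_fourier_on_le c I _ (hcube i)) hnu.
apply: cluster_near_fmax noise _ => i j.
exact: hsep (hcube i) (hcube j).
Qed.
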